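(* Let $\mathcal{T}, \eta > 0 $, $\boldsymbol{v} \in C^1([0,\mathcal{T});\overline{\Omega})$ and let \[ u\in C([0,\mathcal{T});C^2(\overline{\Omega}))\cap C^1([0,\mathcal{T});C(\overline{\Omega})) \] denote a strictly positive classical solution of the non-linear Fokker--Planck equation \begin{equation*} \begin{cases} \begin{alignedat}{3} \partial_t&u && = \partial_x (u(\eta\partial_x\log(u)+ \partial_xf'(u)+ \boldsymbol{v})), &&\text{ in } (0,\mathcal{T}) \times \Omega,\\ &u_0 && = u &&\text{ on } \{0\}\times \overline{\Omega},\\ &0 && = u (\eta\partial_x\log(u) + \partial_xf'(u) + \boldsymbol{v}) &&\text{ on } (0,\mathcal{T})\times \partial\Omega. \end{alignedat} \end{cases} \end{equation*} Then, there exists $K_1 \coloneqq K_1(\boldsymbol{v}) > 0$, whose size depends only on $\|\boldsymbol{v}\|_{L^\infty([0,\mathcal{T})\times\Omega)}$ such that, for each $p \in \mathbb{R} \setminus \{0,1\}$, the following energy dissipation inequality is satisfied on $(0,\mathcal{T})$. \begin{equation*} \frac{1}{p(p-1)}\partial_t \int_{\Omega}u^p dx + \frac{1}{2}\int_{\Omega} \left(\eta+ 2 uf''(u)\right)u^{p-2}|\partial_x u|^2 dx \leqslant \frac{C_1}{\eta}\int_{\Omega}u^p dx. \end{equation*} Furthermore, there exist $K_2,K_3,K_4,K_5 > 0$, whose sizes depend only on $K_1,|\Omega|$ and $\eta$, such that, when $|p| > K_5$, the following energy dissipation inequality is satisfied on $(0,\mathcal{T})$ \begin{equation*} \partial_t\int_{\Omega}u^p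 dx+ K_2\int_{\Omega}u^p dx\leqslant K_3|p|^{K_4}\left(\int_{\Omega}u^\frac{p}{2}\right)^2. \end{equation*}
   Context: $\Omega=(0,L)$ is a bounded open interval; $f\in C^{4,\beta}_{loc}(0,+\infty)$ for some $\beta\in(0,1]$ with $f''\ge 0$ on $(0,+\infty)$. The constant $C_1$ appearing in the first inequality is the constant $K_1$ (in the proof $K_1=\frac12\|\boldsymbol{v}\|^2_{L^\infty}$). *)

From Stdlib Require Import Reals.
From Coquelicot Require Import Coquelicot.
Open Scope R_scope.

Definition cont_on2 (S : R -> R -> Prop) (g : R -> R -> R) : Prop :=
  forall t x, S t x -> forall eps, 0 < eps -> exists delta, 0 < delta /\
    forall s y, S s y -> Rabs (s - t) < delta -> Rabs (y - x) < delta ->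
      Rabs (g s y - g t x) < eps.

(* The closed space-time domain [0,T) x [0,L] (Omega = (0,L)). *)
Definition dom (L T : R) (t x : R) : Prop := 0 <= t < T /\ 0 <= x <= L.

Definition C4beta_loc (f : R -> R) (beta : R) : Prop :=
  (forall k : nat, (k < 4)%nat -> forall x, 0 < x -> ex_derive (Derive_n f k) x) /\
  (forall a b, 0 < a -> a <= b -> exists C, 0 <= C /\
     forall x y, a <= x -> x < y -> y <= b ->
       Rabs (Derive_n f 4 x - Derive_n f 4 y) <= C * Rpower (y - x) beta).

(* v in C^1([0,T) x [0,L]) (partial derivatives in the interior, extending
   continuously up to the closed domain). *)
Definition C1_field (L T : R) (v : R -> R -> R) : Prop :=
  exists vt vx : R -> R -> R,
    (forall t x, 0 < t < T -> 0 <= x <= L -> is_derive (fun s => v s x) t (vt t x)) /\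
    (forall t x, 0 <= t < T -> 0 < x < L -> is_derive (v t) x (vx t x)) /\
    cont_on2 (dom L T) v /\ cont_on2 (dom L T) vt /\ cont_on2 (dom L T) vx.

(* u in C([0,T);C^2([0,L])) cap C^1([0,T);C([0,L])), stated via joint
   continuity of u, d_t u, d_x u, d_xx u on the compact-in-space domain. *)
Definition regular_u (L T : R) (u : R -> R -> R) : Prop :=
  exists ut ux uxx : R -> R -> R,
    (forall t x, 0 < t < T -> 0 <= x <= L -> is_derive (fun s => u s x) t (ut t x)) /\
    (forall t x, 0 <= t < T -> 0 < x < L ->
        is_derive (u t) x (ux t x) /\ is_derive (ux t) x (uxx t x)) /\
    cont_on2 (dom L T) u /\ cont_on2 (dom L T) ut /\
    cont_on2 (dom L T) ux /\ cont_on2 (dom L T) uxx.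

Definition flux (eta : R) (f : R -> R) (v u : R -> R -> R) (t x : R) : R :=
  u t x * (eta * Derive (fun y => ln (u t y)) x
           + Derive (fun y => Derive f (u t y)) x + v t x).

Definition classical_solution (L T eta : R) (f : R -> R) (v u : R -> R -> R) : Prop :=
  regular_u L T u /\
  (forall t x, dom L T t x -> 0 < u t x) /\
  (forall t x, 0 < t < T -> 0 < x < L ->
     Derive (fun s => u s x) t = Derive (fun y => flux eta f v u t y) x) /\
  (forall t, 0 < t < T ->
     filterlim (flux eta f v u t) (at_right 0) (locally 0) /\
     filterlim (flux eta f v u t) (at_left L) (locally 0)).

Definition Lp_mass (L : R) (u : R -> R -> R) (p t : R) : R :=
  RInt (fun x => Rpower (u t x) p) 0 L.

From Stdlib Require Import Reals Lra Lia.
From Coquelicot Require Import Coquelicot.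
Open Scope R_scope.

(* Testing the equation against u^(p-1) and integrating by parts, where the no-flux condition
   kills the boundary terms, gives
     d/dt ∫ u^p = - p (p-1) ∫ u^(p-2) u_x (eta u_x + u f''(u) u_x + u v).
   Young's inequality - u v u_x <= eta u_x^2 / 2 + u^2 v^2 / (2 eta) absorbs the drift and yields
   the first estimate with K1 = M^2/2.  For |p| > 2 the remaining dissipation controls
   eta ∫ u^(p-2) u_x^2 = (4 eta / p^2) ∫ |d_x u^(p/2)|^2.  The one-dimensional interpolation
     ∫ w^2 <= d ∫ w_x^2 + (1/L + L/(4d)) (∫ w)^2,
   which follows from sup w <= mean w + ∫ |w_x| and Cauchy-Schwarz, applied to w = u^(p/2) with
   d of order 1/p^2, then gives the second estimate with K2 = 1 and K4 = 4. *)

(* Coquelicot's generic lemmas produce [plus], [scal], [mult], [opp] and equalities in the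
   carrier of a normed module; these are convertible to the operations on [R], but [ring],
   [field] and [lra] only recognise the latter. *)
Ltac R_ops_in H :=
  repeat first
    [ progress change (plus ?x ?y) with (x + y) in H
    | progress change (scal ?x ?y) with (x * y) in H
    | progress change (mult ?x ?y) with (x * y) in H
    | progress change (opp ?x) with (- x) in H ].

Ltac R_ops :=
  repeat first
    [ progress change (plus ?x ?y) with (x + y)
    | progress change (scal ?x ?y) with (x * y)
    | progress change (mult ?x ?y) with (x * y)
    | progress change (opp ?x) with (- x) ];
  try lazymatch goal with |- ?a = ?b => change (@eq R a b) end.

Lemma Rpower_gt_0 x y : 0 < Rpower x y.
Proof. apply exp_pos. Qed.

Lemma Rpower_sqr x q : Rpower x q ^ 2 = Rpower x (2 * q).
Proof. simpl. rewrite Rmult_1_r, <- Rpower_plus. f_equal; ring. Qed.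

Lemma Rpower_minus_2 x p : 0 < x -> Rpower x p = Rpower x (p - 2) * x ^ 2.
Proof.
  intro Hx. rewrite <- (Rpower_pow 2 x Hx), <- Rpower_plus. f_equal. simpl. ring.
Qed.

Lemma Rpower_Rabs_4 p : p <> 0 -> Rpower (Rabs p) 4 = p ^ 4.
Proof.
  intro Hp. replace 4 with (INR 4) by (simpl; ring).
  rewrite Rpower_pow by (apply Rabs_pos_lt; exact Hp).
  replace (Rabs p ^ 4) with ((Rabs p ^ 2) ^ 2) by ring. rewrite pow2_abs. ring.
Qed.

Lemma is_derive_Rpower q x : 0 < x -> is_derive (fun y => Rpower y q) x (q * Rpower x (q - 1)).
Proof. intro Hx. apply is_derive_Reals, derivable_pt_lim_power, Hx. Qed.

Lemma continuous_Rpower q x : 0 < x -> continuous (fun y => Rpower y q) x.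
Proof.
  intro Hx. apply (ex_derive_continuous (K := R_AbsRing) (V := R_NormedModule)).
  eexists. apply is_derive_Rpower, Hx.
Qed.

Lemma locally_open_interval a b x : a < x < b -> locally x (fun y => a < y < b).
Proof. intro Hx. exact (open_and _ _ (open_gt a) (open_lt b) x Hx). Qed.

Lemma at_right_open_interval a b : a < b -> at_right a (fun x => a < x < b).
Proof.
  intro Hab. exists (mkposreal (b - a) ltac:(lra)). intros y Hy Hay. split; [exact Hay|].
  apply (proj1 (Rabs_lt_between' _ _ _)) in Hy. simpl in Hy. lra.
Qed.

Lemma at_left_open_interval a b : a < b -> at_left b (fun x => a < x < b).
Proof.
  intro Hab. exists (mkposreal (b - a) ltac:(lra)). intros y Hy Hyb. split; [|exact Hyb].
  apply (proj1 (Rabs_lt_between' _ _ _)) in Hy. simpl in Hy. lra.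
Qed.

Lemma filterlim_mult_0_r {T} (F : (T -> Prop) -> Prop) {FF : Filter F} (g h : T -> R) l :
  filterlim g F (locally l) -> filterlim h F (locally 0) ->
  filterlim (fun x => g x * h x) F (locally 0).
Proof.
  intros Hg Hh. rewrite <- (Rmult_0_r l).
  exact (filterlim_comp_2 g h Rmult Hg Hh (filterlim_mult (K := R_AbsRing) l 0)).
Qed.

Lemma filterlim_at_right_continuous_ext (g h : R -> R) a b : a < b -> continuous h a ->
  (forall x, a < x < b -> h x = g x) -> filterlim g (at_right a) (locally (h a)).
Proof.
  intros Hab Hh Hgh. apply (filterlim_ext_loc h).
  - apply (filter_imp (fun x => a < x < b)); [exact Hgh|]. apply at_right_open_interval, Hab.
  - exact (filterlim_filter_le_1 _ (filter_le_within _) Hh).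
Qed.

Lemma filterlim_at_left_continuous_ext (g h : R -> R) a b : a < b -> continuous h b ->
  (forall x, a < x < b -> h x = g x) -> filterlim g (at_left b) (locally (h b)).
Proof.
  intros Hab Hh Hgh. apply (filterlim_ext_loc h).
  - apply (filter_imp (fun x => a < x < b)); [exact Hgh|]. apply at_left_open_interval, Hab.
  - exact (filterlim_filter_le_1 _ (filter_le_within _) Hh).
Qed.

Lemma ex_RInt_continuous_everywhere (h : R -> R) a b : (forall x, continuous h x) -> ex_RInt h a b.
Proof. intro Hh. apply (ex_RInt_continuous (V := R_CompleteNormedModule)). intros; apply Hh. Qed.

Lemma continuous_RInt_upper (h : R -> R) a x : (forall y, continuous h y) ->
  continuous (fun y => RInt h a y) x.
Proof.
  intro Hh. apply (ex_derive_continuous (K := R_AbsRing) (V := R_NormedModule)).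
  exists (h x). apply (is_derive_RInt (V := R_NormedModule) h _ a).
  - apply filter_forall. intro y. apply (RInt_correct (V := R_CompleteNormedModule)).
    apply ex_RInt_continuous_everywhere, Hh.
  - apply Hh.
Qed.

Lemma RInt_derive_vanishing_at_ends (F h : R -> R) a b : a < b -> (forall x, continuous h x) ->
  (forall x, a < x < b -> is_derive F x (h x)) ->
  filterlim F (at_right a) (locally 0) -> filterlim F (at_left b) (locally 0) ->
  RInt h a b = 0.
Proof.
  intros Hab Hh HF Ha Hb.
  assert (Hint : forall y z, a < y < b -> a < z < b -> RInt h y z = F z - F y).
  { intros y z Hy Hz. apply (is_RInt_unique (V := R_CompleteNormedModule)).
    apply (is_RInt_derive (V := R_CompleteNormedModule)); intros x Hx; [|apply Hh].
    apply HF. split.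
    - apply (Rlt_le_trans _ (Rmin y z)); [apply Rmin_glb_lt|]; lra.
    - apply (Rle_lt_trans _ (Rmax y z)); [|apply Rmax_lub_lt]; lra. }
  (* [RInt h a x - F x] is a constant [c] on (a, b); the two end limits give [c = 0]
     and [RInt h a b - c = 0]. *)
  set (m := (a + b) / 2). set (c := RInt h a m - F m).
  assert (HFc : forall x, a < x < b -> RInt h a x - c = F x).
  { intros x Hx. unfold c.
    rewrite <- (RInt_Chasles (V := R_CompleteNormedModule) h a m x)
      by apply ex_RInt_continuous_everywhere, Hh.
    rewrite (Hint m x) by (unfold m; lra). R_ops. ring. }
  assert (Hcont : forall x, continuous (fun y => RInt h a y - c) x).
  { intro x. apply (continuous_minus (V := R_NormedModule)).
    - apply continuous_RInt_upper, Hh.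
    - apply continuous_const. }
  assert (Hc0 := filterlim_locally_unique _ _ _
    (filterlim_at_right_continuous_ext F _ a b Hab (Hcont a) HFc) Ha).
  assert (Hcb := filterlim_locally_unique _ _ _
    (filterlim_at_left_continuous_ext F _ a b Hab (Hcont b) HFc) Hb).
  rewrite RInt_point in Hc0. change zero with 0 in Hc0. lra.
Qed.

Lemma continuous_pow (g : R -> R) n x : continuous g x -> continuous (fun y => g y ^ n) x.
Proof.
  intro Hg. induction n as [|n IH]; simpl.
  - apply continuous_const.
  - apply (continuous_mult (K := R_AbsRing) g); assumption.
Qed.

Ltac solve_continuous_with leaf :=
  repeat match goal with
  | |- continuous (fun _ => ?c) _ => apply continuous_const
  | |- continuous (fun y => @?f y + @?g y) _ => apply (continuous_plus (V := R_NormedModule) f g)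
  | |- continuous (fun y => @?f y - @?g y) _ => apply (continuous_minus (V := R_NormedModule) f g)
  | |- continuous (fun y => @?f y * @?g y) _ => apply (continuous_mult (K := R_AbsRing) f g)
  | |- continuous (fun y => @?f y ^ _) _ => apply (continuous_pow f)
  | H : forall x, continuous ?h x |- continuous ?h _ => apply H
  | |- continuous _ _ => leaf
  end.

Ltac solve_continuous := solve_continuous_with fail.

Lemma RInt_sqr_Cauchy_Schwarz (g : R -> R) a b : a < b -> (forall x, continuous g x) ->
  RInt g a b ^ 2 <= (b - a) * RInt (fun x => g x ^ 2) a b.
Proof.
  intros Hab Hg. set (c := RInt g a b / (b - a)).
  assert (Hpos : 0 <= RInt (fun x => g x ^ 2 + (- 2 * c * g x + c ^ 2)) a b).
  { apply RInt_ge_0; [lra| |].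
    - apply ex_RInt_continuous_everywhere. intro. solve_continuous.
    - intros x _. replace (g x ^ 2 + (-2 * c * g x + c ^ 2)) with ((g x - c) ^ 2) by ring.
      apply pow2_ge_0. }
  rewrite (RInt_plus (V := R_CompleteNormedModule)), (RInt_plus (V := R_CompleteNormedModule)),
    (RInt_scal (V := R_CompleteNormedModule)), (RInt_const (V := R_CompleteNormedModule)) in Hpos
    by (apply ex_RInt_continuous_everywhere; intro; solve_continuous).
  set (I := RInt g a b) in *. set (E := RInt (fun x => g x ^ 2) a b) in *.
  R_ops_in Hpos. unfold c in Hpos.
  assert (Hmul := Rmult_le_pos (b - a) _ ltac:(lra) Hpos).
  replace ((b - a) * _) with ((b - a) * E - I ^ 2) in Hmul by (field; lra).
  lra.
Qed.

Lemma RInt_subinterval_le (g : R -> R) a b y z : a <= y -> y <= z -> z <= b ->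
  (forall x, continuous g x) -> (forall x, a < x < b -> 0 <= g x) ->
  RInt g y z <= RInt g a b.
Proof.
  intros Hay Hyz Hzb Hg Hpos.
  assert (Hex : forall c d, ex_RInt g c d) by (intros; apply ex_RInt_continuous_everywhere, Hg).
  rewrite <- (RInt_Chasles (V := R_CompleteNormedModule) g a y b),
    <- (RInt_Chasles (V := R_CompleteNormedModule) g y z b)
    by apply Hex.
  assert (0 <= RInt g a y) by (apply RInt_ge_0; auto; intros; apply Hpos; lra).
  assert (0 <= RInt g z b) by (apply RInt_ge_0; auto; intros; apply Hpos; lra).
  R_ops. lra.
Qed.

Section Interpolation.

Variables (W W' : R -> R) (a b : R).
Hypothesis Hab : a < b.
Hypothesis W_cont : forall x, continuous W x.
Hypothesis W'_cont : forall x, continuous W' x.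
Hypothesis W_deriv : forall x, a < x < b -> is_derive W x (W' x).

Lemma sub_le_RInt_abs_derive x y : a < x < b -> a < y < b ->
  W x - W y <= RInt (fun z => Rabs (W' z)) a b.
Proof.
  intros Hx Hy.
  assert (HabsW' : forall z, continuous (fun z => Rabs (W' z)) z)
    by (intro; apply continuous_Rabs_comp, W'_cont).
  assert (HFTC : RInt W' y x = W x - W y).
  { apply (is_RInt_unique (V := R_CompleteNormedModule)).
    apply (is_RInt_derive (V := R_CompleteNormedModule)); intros z Hz; [|apply W'_cont].
    apply W_deriv. split.
    - apply (Rlt_le_trans _ (Rmin y x)); [apply Rmin_glb_lt|]; lra.
    - apply (Rle_lt_trans _ (Rmax y x)); [|apply Rmax_lub_lt]; lra. }
  destruct (Rle_lt_dec y x) as [Hyx | Hxy].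
  - rewrite <- HFTC. eapply Rle_trans; [apply Rle_abs|].
    eapply Rle_trans;
      [apply abs_RInt_le; [exact Hyx | apply ex_RInt_continuous_everywhere, W'_cont]|].
    apply RInt_subinterval_le; auto; try lra. intros; apply Rabs_pos.
  - rewrite <- HFTC, <- (opp_RInt_swap (V := R_CompleteNormedModule))
      by apply ex_RInt_continuous_everywhere, W'_cont.
    R_ops. eapply Rle_trans; [apply Rabs_maj2|].
    eapply Rle_trans; [apply abs_RInt_le; [lra | apply ex_RInt_continuous_everywhere, W'_cont]|].
    apply RInt_subinterval_le; auto; try lra. intros; apply Rabs_pos.
Qed.

Lemma le_mean_add_RInt_abs_derive x : a < x < b ->
  W x <= RInt W a b / (b - a) + RInt (fun z => Rabs (W' z)) a b.
Proof.
  intro Hx. set (S := RInt (fun z => Rabs (W' z)) a b).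
  assert (Hle : RInt (fun _ => W x) a b <= RInt (fun y => W y + S) a b).
  { apply RInt_le; [lra | | |].
    - apply ex_RInt_continuous_everywhere. intro. solve_continuous.
    - apply ex_RInt_continuous_everywhere. intro. solve_continuous.
    - intros y Hy. assert (H := sub_le_RInt_abs_derive x y Hx Hy). fold S in H. lra. }
  rewrite (RInt_const (V := R_CompleteNormedModule)), (RInt_plus (V := R_CompleteNormedModule)),
    (RInt_const (V := R_CompleteNormedModule)) in Hle
    by (apply ex_RInt_continuous_everywhere; intro; solve_continuous).
  R_ops_in Hle.
  apply (Rmult_le_reg_l (b - a)); [lra|].
  replace ((b - a) * (RInt W a b / (b - a) + S)) with (RInt W a b + (b - a) * S) by (field; lra).
  lra.
Qed.

Lemma RInt_sqr_interpolation d : 0 < d -> (forall x, a < x < b -> 0 <= W x) ->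
  RInt (fun x => W x ^ 2) a b <=
  d * RInt (fun x => W' x ^ 2) a b + (/ (b - a) + (b - a) / (4 * d)) * RInt W a b ^ 2.
Proof.
  intros Hd Hpos.
  set (S := RInt (fun z => Rabs (W' z)) a b).
  set (I := RInt W a b). set (E := RInt (fun x => W' x ^ 2) a b).
  set (J := RInt (fun x => W x ^ 2) a b).
  assert (HabsW' : forall z, continuous (fun z => Rabs (W' z)) z)
    by (intro; apply continuous_Rabs_comp, W'_cont).
  assert (Hsqr : J <= RInt (fun x => (I / (b - a) + S) * W x) a b).
  { unfold J. apply RInt_le; [lra | | |].
    - apply ex_RInt_continuous_everywhere. intro. solve_continuous.
    - apply ex_RInt_continuous_everywhere. intro. solve_continuous.
    - intros x Hx. assert (H := le_mean_add_RInt_abs_derive x Hx). assert (H0 := Hpos x Hx).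
      fold I S in H. nra. }
  rewrite (RInt_scal (V := R_CompleteNormedModule)) in Hsqr
    by (apply ex_RInt_continuous_everywhere, W_cont).
  R_ops_in Hsqr. fold I in Hsqr.
  assert (HCS : S ^ 2 <= (b - a) * E).
  { unfold E. rewrite (RInt_ext (fun x => W' x ^ 2) (fun x => Rabs (W' x) ^ 2))
      by (intros; rewrite pow2_abs; reflexivity).
    apply RInt_sqr_Cauchy_Schwarz; assumption. }
  assert (Hyoung : S * I <= d * S ^ 2 / (b - a) + (b - a) * I ^ 2 / (4 * d)).
  { assert (0 <= d / (b - a) * (S - (b - a) * I / (2 * d)) ^ 2)
      by (apply Rmult_le_pos; [apply Rlt_le, Rdiv_lt_0_compat; lra | apply pow2_ge_0]).
    replace (d * S ^ 2 / (b - a) + (b - a) * I ^ 2 / (4 * d))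
      with (S * I + d / (b - a) * (S - (b - a) * I / (2 * d)) ^ 2) by (field; lra).
    lra. }
  assert (d * S ^ 2 / (b - a) <= d * E).
  { apply (Rmult_le_reg_l (b - a)); [lra|].
    replace ((b - a) * (d * S ^ 2 / (b - a))) with (d * S ^ 2) by (field; lra). nra. }
  replace ((/ (b - a) + (b - a) / (4 * d)) * I ^ 2)
    with (I ^ 2 / (b - a) + (b - a) * I ^ 2 / (4 * d))
    by (field; lra).
  replace ((I / (b - a) + S) * I) with (I ^ 2 / (b - a) + S * I) in Hsqr by (field; lra).
  lra.
Qed.

End Interpolation.

Lemma young_drift_bound w U X F V M eta : 0 <= w -> Rabs V <= M -> 0 < eta ->
  - (w * X * (eta * X + U * F * X + U * V)) + / 2 * ((eta + 2 * U * F) * w * X ^ 2)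
  <= M ^ 2 / 2 / eta * (w * U ^ 2).
Proof.
  intros Hw HV Heta.
  assert (HV2 : V ^ 2 <= M ^ 2)
    by (rewrite <- pow2_abs; apply pow_incr; split; [apply Rabs_pos | exact HV]).
  assert (Hsq : 0 <= (eta * X + U * V) ^ 2 + U ^ 2 * (M ^ 2 - V ^ 2))
    by (apply Rplus_le_le_0_compat;
        [apply pow2_ge_0 | apply Rmult_le_pos; [apply pow2_ge_0 | lra]]).
  assert (H := Rmult_le_pos (w / (2 * eta)) _ (Rdiv_le_0_compat w (2 * eta) Hw ltac:(lra)) Hsq).
  replace (w / (2 * eta) * _) with (M ^ 2 / 2 / eta * (w * U ^ 2) -
     (- (w * X * (eta * X + U * F * X + U * V)) + / 2 * ((eta + 2 * U * F) * w * X ^ 2)))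
    in H by (field; lra).
  lra.
Qed.

Definition absorption_constant (k L eta : R) : R :=
  (2 * k + 1) / L + (2 * k + 1) ^ 2 * L / (4 * eta).

Lemma absorption_constant_pos k L eta : 0 <= k -> 0 < L -> 0 < eta ->
  0 < absorption_constant k L eta.
Proof.
  intros Hk HL Heta. unfold absorption_constant.
  assert (0 < (2 * k + 1) / L) by (apply Rdiv_lt_0_compat; lra).
  assert (0 <= (2 * k + 1) ^ 2 * L / (4 * eta))
    by (apply Rdiv_le_0_compat; [apply Rmult_le_pos; [apply pow2_ge_0 | lra] | lra]).
  lra.
Qed.

Lemma absorb_dissipation Der J D I p k eta L :
  0 < eta -> 0 < L -> 0 <= k -> 2 < Rabs p -> 0 <= D ->
  Der <= p * (p - 1) * (k * J - eta / 2 * D) ->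
  (forall d, 0 < d -> J <= d * (p ^ 2 / 4 * D) + (/ L + L / (4 * d)) * I ^ 2) ->
  Der + J <= absorption_constant k L eta * p ^ 4 * I ^ 2.
Proof.
  intros Heta HL Hk Hp HD Hder Hinterp.
  set (P := p * (p - 1)) in Hder. set (c := 2 * k + 1).
  assert (Hp2 : 4 < p ^ 2) by (rewrite <- pow2_abs; nra).
  assert (HP : p ^ 2 / 2 <= P <= 2 * p ^ 2)
    by (unfold P; revert Hp; unfold Rabs; destruct Rcase_abs; intro; split; nra).
  set (A := P * k + 1).
  assert (HA : 0 < A <= c * p ^ 2) by (unfold A, c; split; nra).
  (* With this [d] the gradient term of the interpolation is exactly [P * eta / 2 * D]. *)
  set (d := 2 * P * eta / (A * p ^ 2)).
  assert (Hd : 0 < d) by (apply Rdiv_lt_0_compat; nra).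
  assert (HJ := Rmult_le_compat_l A _ _ ltac:(lra) (Hinterp d Hd)).
  assert (Hdiss : A * (d * (p ^ 2 / 4 * D)) = P * eta / 2 * D) by (unfold d; field; split; nra).
  assert (Hcoef : A * (/ L + L / (4 * d)) = A / L + A ^ 2 * (L / (8 * eta)) * (p ^ 2 / P))
    by (unfold d; field; repeat split; nra).
  assert (Hratio : 0 <= p ^ 2 / P <= 2).
  { split; [apply Rlt_le, Rdiv_lt_0_compat; lra|].
    apply (Rmult_le_reg_r P); [lra|]. unfold Rdiv. rewrite Rmult_assoc, Rinv_l by lra. lra. }
  assert (HL8 : 0 < L / (8 * eta)) by (apply Rdiv_lt_0_compat; lra).
  assert (Hbound : A * (/ L + L / (4 * d)) <= absorption_constant k L eta * p ^ 4).
  { rewrite Hcoef. unfold absorption_constant. fold c.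
    assert (A / L <= c / L * p ^ 4).
    { unfold Rdiv. rewrite (Rmult_comm c), Rmult_assoc, (Rmult_comm A).
      apply Rmult_le_compat_l; [apply Rlt_le, Rinv_0_lt_compat, HL | nra]. }
    assert (A ^ 2 * (L / (8 * eta)) * (p ^ 2 / P) <= c ^ 2 * p ^ 4 * (L / (8 * eta)) * 2)
      by (apply Rmult_le_compat; try nra; apply Rmult_le_compat_r; nra).
    replace ((c / L + c ^ 2 * L / (4 * eta)) * p ^ 4)
      with (c / L * p ^ 4 + c ^ 2 * p ^ 4 * (L / (8 * eta)) * 2) by (field; lra).
    lra. }
  assert (HI := Rmult_le_compat_r (I ^ 2) _ _ (pow2_ge_0 I) Hbound).
  replace (A * (d * (p ^ 2 / 4 * D) + (/ L + L / (4 * d)) * I ^ 2))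
    with (P * eta / 2 * D + A * (/ L + L / (4 * d)) * I ^ 2) in HJ by (rewrite <- Hdiss; ring).
  assert (A * J = P * k * J + J) by (unfold A; ring).
  lra.
Qed.

(* Time slices of the solution only make sense on [0, L]; precomposing them with [clamp L]
   gives functions continuous on all of R, the form Coquelicot's integrability and
   fundamental-theorem lemmas require. *)
Definition clamp (L x : R) : R := Rmax 0 (Rmin L x).

Lemma clamp_id L x : 0 <= x <= L -> clamp L x = x.
Proof. intros. unfold clamp, Rmax, Rmin. repeat destruct Rle_dec; lra. Qed.

Lemma clamp_in L x : 0 <= L -> 0 <= clamp L x <= L.
Proof. intros. unfold clamp, Rmax, Rmin. repeat destruct Rle_dec; lra. Qed.

Lemma clamp_lipschitz L x y : 0 <= L -> Rabs (clamp L y - clamp L x) <= Rabs (y - x).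
Proof.
  intros. unfold clamp, Rmax, Rmin, Rabs.
  repeat destruct Rle_dec; repeat destruct Rcase_abs; lra.
Qed.

Lemma ex_RInt_clamped (g : R -> R) L : 0 < L ->
  (forall x, continuous (fun y => g (clamp L y)) x) -> ex_RInt g 0 L.
Proof.
  intros HL Hg. apply (ex_RInt_ext (V := R_CompleteNormedModule) (fun y => g (clamp L y))).
  - rewrite Rmin_left, Rmax_right by lra. intros x Hx. rewrite clamp_id by lra. reflexivity.
  - apply ex_RInt_continuous_everywhere, Hg.
Qed.

Section ClampedSlices.

Variables (L T : R) (g : R -> R -> R).
Hypothesis HL : 0 <= L.
Hypothesis g_cont : cont_on2 (dom L T) g.

Lemma continuous_clamped_slice t x : 0 <= t < T -> continuous (fun y => g t (clamp L y)) x.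
Proof.
  intro Ht. apply continuity_pt_filterlim. intros eps Heps.
  assert (Hx : dom L T t (clamp L x)) by (split; [exact Ht | apply clamp_in, HL]).
  destruct (g_cont _ _ Hx eps Heps) as [d [Hd Hg]]. exists d. split; [exact Hd|].
  intros y [_ Hy]. apply Hg.
  - split; [exact Ht | apply clamp_in, HL].
  - rewrite Rminus_diag, Rabs_R0. exact Hd.
  - eapply Rle_lt_trans; [apply clamp_lipschitz, HL | exact Hy].
Qed.

Lemma continuity_2d_clamped_slice t y : 0 < t < T ->
  continuity_2d_pt (fun s z => g s (clamp L z)) t y.
Proof.
  intros Ht eps.
  assert (Hy : dom L T t (clamp L y)) by (split; [lra | apply clamp_in, HL]).
  destruct (g_cont _ _ Hy eps (cond_pos eps)) as [d [Hd Hg]].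
  assert (Hpos : 0 < Rmin d (Rmin t (T - t)))
    by (repeat apply Rmin_pos; lra).
  exists (mkposreal _ Hpos). simpl. intros s z Hs Hz.
  assert (m1 := Rmin_l d (Rmin t (T - t))). assert (m2 := Rmin_r d (Rmin t (T - t))).
  assert (m3 := Rmin_l t (T - t)). assert (m4 := Rmin_r t (T - t)).
  apply Rabs_lt_between' in Hs.
  apply Hg.
  - split; [lra | apply clamp_in, HL].
  - apply Rabs_lt_between'. lra.
  - eapply Rle_lt_trans; [apply clamp_lipschitz, HL | lra].
Qed.

End ClampedSlices.

Section NoFluxSolution.

Variables (L T eta M : R) (f : R -> R) (v vx u ut ux uxx : R -> R -> R).
Hypothesis HL : 0 < L.
Hypothesis Heta : 0 < eta.
Hypothesis f_C3 : forall k, (k < 3)%nat -> forall z, 0 < z -> ex_derive (Derive_n f k) z.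
Hypothesis v_dx : forall t x, 0 <= t < T -> 0 < x < L -> is_derive (v t) x (vx t x).
Hypothesis v_cont : cont_on2 (dom L T) v.
Hypothesis v_bound : forall t x, dom L T t x -> Rabs (v t x) <= M.
Hypothesis f2_nonneg : forall z, 0 < z -> 0 <= Derive_n f 2 z.
Hypothesis u_dt : forall t x, 0 < t < T -> 0 <= x <= L -> is_derive (fun s => u s x) t (ut t x).
Hypothesis u_dx : forall t x, 0 <= t < T -> 0 < x < L ->
  is_derive (u t) x (ux t x) /\ is_derive (ux t) x (uxx t x).
Hypothesis u_cont : cont_on2 (dom L T) u.
Hypothesis ut_cont : cont_on2 (dom L T) ut.
Hypothesis ux_cont : cont_on2 (dom L T) ux.
Hypothesis u_pos : forall t x, dom L T t x -> 0 < u t x.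
Hypothesis u_eq : forall t x, 0 < t < T -> 0 < x < L ->
  Derive (fun s => u s x) t = Derive (fun y => flux eta f v u t y) x.
Hypothesis no_flux : forall t, 0 < t < T ->
  filterlim (flux eta f v u t) (at_right 0) (locally 0) /\
  filterlim (flux eta f v u t) (at_left L) (locally 0).

Lemma clamped_u_pos t y : 0 <= t < T -> 0 < u t (clamp L y).
Proof. intro Ht. apply u_pos. split; [exact Ht | apply clamp_in; lra]. Qed.

Lemma continuous_clamped_Rpower q t x : 0 <= t < T ->
  continuous (fun y => Rpower (u t (clamp L y)) q) x.
Proof.
  intro Ht. apply (continuous_comp (fun y => u t (clamp L y)) (fun z => Rpower z q)).
  - apply (continuous_clamped_slice L T); [lra | exact u_cont | exact Ht].
  - apply continuous_Rpower, clamped_u_pos, Ht.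
Qed.

Lemma continuous_clamped_f2 t x : 0 <= t < T ->
  continuous (fun y => Derive_n f 2 (u t (clamp L y))) x.
Proof.
  intro Ht. apply (continuous_comp (fun y => u t (clamp L y)) (Derive_n f 2)).
  - apply (continuous_clamped_slice L T); [lra | exact u_cont | exact Ht].
  - apply (ex_derive_continuous (K := R_AbsRing) (V := R_NormedModule)).
    apply f_C3; [auto | apply clamped_u_pos, Ht].
Qed.

(* The leading [idtac;] keeps the [match] from being run when the argument is passed. *)
Ltac solve_slice_continuity :=
  solve_continuous_with ltac:(idtac; match goal with
    | |- continuous (fun y => Rpower (u _ (clamp L y)) _) _ => apply continuous_clamped_Rpower; lra
    | |- continuous (fun y => Derive_n f 2 (u _ (clamp L y))) _ => apply continuous_clamped_f2; lra
    | |- continuous (fun y => ?g _ (clamp L y)) _ =>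
        apply (continuous_clamped_slice L T g); [lra | assumption | lra]
    end).

Ltac solve_ex_RInt_slice :=
  apply (ex_RInt_clamped _ L HL); intro; cbv beta; solve_slice_continuity.

Lemma Derive_u_slice t x : 0 <= t < T -> 0 < x < L -> Derive (u t) x = ux t x.
Proof. intros Ht Hx. apply is_derive_unique, (u_dx t x Ht Hx). Qed.

Lemma is_derive_Rpower_slice q t x : 0 <= t < T -> 0 < x < L ->
  is_derive (fun y => Rpower (u t y) q) x (q * Rpower (u t x) (q - 1) * ux t x).
Proof.
  intros Ht Hx.
  assert (H := is_derive_comp (fun z => Rpower z q) (u t) x _ _
    (is_derive_Rpower q _ (u_pos t x ltac:(split; lra))) (proj1 (u_dx t x Ht Hx))).
  R_ops_in H. rewrite Rmult_comm. exact H.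
Qed.

Lemma flux_expand t x : 0 <= t < T -> 0 < x < L ->
  flux eta f v u t x = eta * ux t x + u t x * Derive_n f 2 (u t x) * ux t x + u t x * v t x.
Proof.
  intros Ht Hx. assert (Hu := u_pos t x ltac:(split; lra)).
  destruct (u_dx t x Ht Hx) as [Hux _].
  assert (Hln : is_derive (fun y => ln (u t y)) x (ux t x / u t x)).
  { assert (H := is_derive_comp ln (u t) x _ _ (is_derive_ln _ Hu) Hux).
    R_ops_in H. exact H. }
  assert (Hf' : is_derive (fun y => Derive f (u t y)) x (Derive_n f 2 (u t x) * ux t x)).
  { assert (H := is_derive_comp (Derive f) (u t) x _ _
      (Derive_correct _ _ (f_C3 1 ltac:(auto) _ Hu)) Hux).
    R_ops_in H. rewrite Rmult_comm. exact H. }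
  unfold flux.
  replace (Derive (fun y => ln (u t y)) x) with (ux t x / u t x)
    by (symmetry; apply is_derive_unique, Hln).
  replace (Derive (fun y => Derive f (u t y)) x) with (Derive_n f 2 (u t x) * ux t x)
    by (symmetry; apply is_derive_unique, Hf').
  field. lra.
Qed.

Lemma is_derive_flux t x : 0 < t < T -> 0 < x < L -> is_derive (flux eta f v u t) x (ut t x).
Proof.
  intros Ht Hx. assert (Ht0 : 0 <= t < T) by lra.
  assert (Hex : ex_derive (flux eta f v u t) x).
  { apply (ex_derive_ext_loc
      (fun y => eta * ux t y + u t y * Derive_n f 2 (u t y) * ux t y + u t y * v t y)).
    - apply (filter_imp (fun y => 0 < y < L)); [|apply locally_open_interval, Hx].
      intros y Hy. symmetry. apply flux_expand; assumption.
    - destruct (u_dx t x Ht0 Hx) as [Hux Huxx].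
      auto_derive. repeat split; first
        [ exists (ux t x); exact Hux
        | exists (uxx t x); exact Huxx
        | exists (vx t x); apply v_dx; assumption
        | apply (f_C3 2); [auto | apply u_pos; split; lra] ]. }
  replace (ut t x) with (Derive (flux eta f v u t) x).
  - apply Derive_correct, Hex.
  - rewrite <- (is_derive_unique _ _ _ (u_dt t x Ht ltac:(lra))). symmetry. exact (u_eq t x Ht Hx).
Qed.

Lemma RInt_Rpower_ut_by_parts p t : 0 < t < T ->
  RInt (fun x => Rpower (u t x) (p - 1) * ut t x) 0 L =
  - (p - 1) * RInt (fun x => Rpower (u t x) (p - 2) * ux t x * flux eta f v u t x) 0 L.
Proof.
  intro Ht. assert (Ht0 : 0 <= t < T) by lra.
  set (A y := Rpower (u t (clamp L y)) (p - 2) * ux t (clamp L y) *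
    (eta * ux t (clamp L y) + u t (clamp L y) * Derive_n f 2 (u t (clamp L y)) * ux t (clamp L y)
     + u t (clamp L y) * v t (clamp L y))).
  set (B y := Rpower (u t (clamp L y)) (p - 1) * ut t (clamp L y)).
  assert (HA : forall x, 0 < x < L -> A x = Rpower (u t x) (p - 2) * ux t x * flux eta f v u t x)
    by (intros; unfold A; rewrite clamp_id, flux_expand by lra; reflexivity).
  assert (HB : forall x, 0 < x < L -> B x = Rpower (u t x) (p - 1) * ut t x)
    by (intros; unfold B; rewrite clamp_id by lra; reflexivity).
  assert (cA : forall x, continuous A x) by (intro; unfold A; solve_slice_continuity).
  assert (cB : forall x, continuous B x) by (intro; unfold B; solve_slice_continuity).
  assert (Hzero : RInt (fun y => (p - 1) * A y + B y) 0 L = 0).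
  { apply (RInt_derive_vanishing_at_ends (fun y => Rpower (u t y) (p - 1) * flux eta f v u t y));
      [lra | intro; solve_continuous | | |].
    - intros x Hx.
      assert (H := is_derive_mult _ _ x _ _ (is_derive_Rpower_slice (p - 1) t x Ht0 Hx)
        (is_derive_flux t x Ht Hx) Rmult_comm).
      R_ops_in H. rewrite HA, HB by exact Hx.
      rewrite <- !Rmult_assoc. replace (p - 1 - 1) with (p - 2) in H by ring. exact H.
    - apply (filterlim_mult_0_r _ _ _ (Rpower (u t (clamp L 0)) (p - 1))); [|apply no_flux, Ht].
      apply (filterlim_at_right_continuous_ext _ (fun y => Rpower (u t (clamp L y)) (p - 1)) 0 L);
        [exact HL | |].
      + apply continuous_clamped_Rpower, Ht0.
      + intros x Hx. rewrite clamp_id by lra. reflexivity.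
    - apply (filterlim_mult_0_r _ _ _ (Rpower (u t (clamp L L)) (p - 1))); [|apply no_flux, Ht].
      apply (filterlim_at_left_continuous_ext _ (fun y => Rpower (u t (clamp L y)) (p - 1)) 0 L);
        [exact HL | |].
      + apply continuous_clamped_Rpower, Ht0.
      + intros x Hx. rewrite clamp_id by lra. reflexivity. }
  rewrite (RInt_plus (V := R_CompleteNormedModule)), (RInt_scal (V := R_CompleteNormedModule))
    in Hzero
    by (apply ex_RInt_continuous_everywhere; intro; solve_continuous).
  R_ops_in Hzero.
  rewrite (RInt_ext A (fun x => Rpower (u t x) (p - 2) * ux t x * flux eta f v u t x)),
    (RInt_ext B (fun x => Rpower (u t x) (p - 1) * ut t x)) in Hzero
    by (rewrite Rmin_left, Rmax_right by lra; auto).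
  lra.
Qed.

Lemma is_derive_clamped_Rpower_time p s y : 0 < s < T ->
  is_derive (fun z => Rpower (u z (clamp L y)) p) s
    (p * Rpower (u s (clamp L y)) (p - 1) * ut s (clamp L y)).
Proof.
  intro Hs.
  assert (H := is_derive_comp (fun z => Rpower z p) (fun z => u z (clamp L y)) s _ _
    (is_derive_Rpower p _ (clamped_u_pos s y ltac:(lra)))
    (u_dt s (clamp L y) Hs (clamp_in L y ltac:(lra)))).
  R_ops_in H.
  replace (p * Rpower (u s (clamp L y)) (p - 1) * ut s (clamp L y))
    with (ut s (clamp L y) * (p * Rpower (u s (clamp L y)) (p - 1))) by ring.
  exact H.
Qed.

Lemma continuity_2d_clamped_Rpower_ut p t y : 0 < t < T ->
  continuity_2d_pt (fun s z => p * Rpower (u s (clamp L z)) (p - 1) * ut s (clamp L z)) t y.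
Proof.
  intro Ht.
  apply (continuity_2d_pt_mult (fun s z => p * Rpower (u s (clamp L z)) (p - 1))).
  - apply (continuity_2d_pt_mult (fun _ _ => p)); [apply continuity_2d_pt_const|].
    apply (continuity_1d_2d_pt_comp (fun z => Rpower z (p - 1)) (fun s z => u s (clamp L z))).
    + apply continuity_pt_filterlim, continuous_Rpower, clamped_u_pos. lra.
    + apply (continuity_2d_clamped_slice L T); [lra | exact u_cont | exact Ht].
  - apply (continuity_2d_clamped_slice L T); [lra | exact ut_cont | exact Ht].
Qed.

Lemma is_derive_Lp_mass p t : 0 < t < T ->
  is_derive (Lp_mass L u p) t (p * RInt (fun x => Rpower (u t x) (p - 1) * ut t x) 0 L).
Proof.
  intro Ht. set (F s y := Rpower (u s (clamp L y)) p).
  assert (Hnear : locally t (fun s => 0 < s < T)) by (apply locally_open_interval, Ht).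
  apply (is_derive_ext (fun s => RInt (F s) 0 L)).
  { intro s. unfold Lp_mass, F. apply RInt_ext. rewrite Rmin_left, Rmax_right by lra.
    intros x Hx. rewrite clamp_id by lra. reflexivity. }
  replace (p * RInt (fun x => Rpower (u t x) (p - 1) * ut t x) 0 L)
    with (RInt (fun y => Derive (fun s => F s y) t) 0 L).
  - apply is_derive_RInt_param.
    + apply (filter_imp (fun s => 0 < s < T)); [|exact Hnear].
      intros s Hs y _. eexists. apply is_derive_clamped_Rpower_time, Hs.
    + intros y _. apply (continuity_2d_pt_ext_loc
        (fun s z => p * Rpower (u s (clamp L z)) (p - 1) * ut s (clamp L z)));
        [|apply continuity_2d_clamped_Rpower_ut, Ht].
      assert (Hd : 0 < Rmin t (T - t)) by (apply Rmin_pos; lra).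
      exists (mkposreal _ Hd). intros s z Hs _. simpl in Hs. apply Rabs_lt_between' in Hs.
      assert (Rmin t (T - t) <= t) by apply Rmin_l.
      assert (Rmin t (T - t) <= T - t) by apply Rmin_r.
      symmetry. apply is_derive_unique, is_derive_clamped_Rpower_time. lra.
    + apply (filter_imp (fun s => 0 < s < T)); [|exact Hnear].
      intros s Hs. apply ex_RInt_continuous_everywhere. intro.
      apply continuous_clamped_Rpower. lra.
  - rewrite <- (RInt_scal (V := R_CompleteNormedModule))
      by (apply (ex_RInt_clamped _ L HL); intro; solve_slice_continuity).
    apply RInt_ext. rewrite Rmin_left, Rmax_right by lra. intros x Hx.
    replace (Derive (fun s => F s x) t)
      with (p * Rpower (u t (clamp L x)) (p - 1) * ut t (clamp L x))
      by (symmetry; apply is_derive_unique, is_derive_clamped_Rpower_time, Ht).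
    rewrite clamp_id by lra. R_ops. ring.
Qed.

Lemma Derive_Lp_mass p t : 0 < t < T ->
  Derive (fun s => Lp_mass L u p s) t =
  - (p * (p - 1)) * RInt (fun x => Rpower (u t x) (p - 2) * ux t x *
      (eta * ux t x + u t x * Derive_n f 2 (u t x) * ux t x + u t x * v t x)) 0 L.
Proof.
  intro Ht. apply is_derive_unique.
  replace (- (p * (p - 1)) * _) with (p * RInt (fun x => Rpower (u t x) (p - 1) * ut t x) 0 L).
  - apply is_derive_Lp_mass, Ht.
  - rewrite RInt_Rpower_ut_by_parts by exact Ht.
    rewrite (RInt_ext (fun x => Rpower (u t x) (p - 2) * ux t x * flux eta f v u t x)
      (fun x => Rpower (u t x) (p - 2) * ux t x *
        (eta * ux t x + u t x * Derive_n f 2 (u t x) * ux t x + u t x * v t x))).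
    + ring.
    + rewrite Rmin_left, Rmax_right by lra. intros x Hx. rewrite flux_expand by lra. reflexivity.
Qed.

Lemma Lp_energy_inequality p t : p <> 0 -> p <> 1 -> 0 < t < T ->
  / (p * (p - 1)) * Derive (fun s => Lp_mass L u p s) t
  + / 2 * RInt (fun x => (eta + 2 * u t x * Derive_n f 2 (u t x))
                         * Rpower (u t x) (p - 2) * (Derive (u t) x) ^ 2) 0 L
  <= M ^ 2 / 2 / eta * Lp_mass L u p t.
Proof.
  intros Hp0 Hp1 Ht. assert (Ht0 : 0 <= t < T) by lra.
  set (G x := Rpower (u t x) (p - 2) * ux t x *
    (eta * ux t x + u t x * Derive_n f 2 (u t x) * ux t x + u t x * v t x)).
  set (Q x := (eta + 2 * u t x * Derive_n f 2 (u t x)) * Rpower (u t x) (p - 2) * ux t x ^ 2).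
  rewrite (RInt_ext _ Q)
    by (rewrite Rmin_left, Rmax_right by lra; intros x Hx; unfold Q;
        rewrite Derive_u_slice by lra; reflexivity).
  rewrite Derive_Lp_mass by exact Ht. fold G.
  replace (/ (p * (p - 1)) * (- (p * (p - 1)) * RInt G 0 L)) with (-1 * RInt G 0 L)
    by (field; split; [intro; apply Hp1; lra | exact Hp0]).
  assert (exG : ex_RInt G 0 L) by (unfold G; solve_ex_RInt_slice).
  assert (exQ : ex_RInt Q 0 L) by (unfold Q; solve_ex_RInt_slice).
  assert (exU : ex_RInt (fun x => Rpower (u t x) p) 0 L) by solve_ex_RInt_slice.
  unfold Lp_mass.
  rewrite <- (RInt_scal (V := R_CompleteNormedModule) _ _ _ (M ^ 2 / 2 / eta)) by exact exU.
  replace (-1 * RInt G 0 L + / 2 * RInt Q 0 L) with (RInt (fun x => -1 * G x + / 2 * Q x) 0 L).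
  2:{ rewrite (RInt_plus (V := R_CompleteNormedModule) (fun x => -1 * G x) (fun x => / 2 * Q x)),
        (RInt_scal (V := R_CompleteNormedModule) G), (RInt_scal (V := R_CompleteNormedModule) Q);
        [reflexivity | assumption | assumption | exact (ex_RInt_scal G 0 L (-1) exG)
        | exact (ex_RInt_scal Q 0 L (/ 2) exQ)]. }
  apply RInt_le; [lra | | |].
  - apply (ex_RInt_plus (V := R_CompleteNormedModule));
      apply (ex_RInt_scal (V := R_CompleteNormedModule)); assumption.
  - apply (ex_RInt_scal (V := R_CompleteNormedModule)); assumption.
  - intros x Hx. assert (Hu : 0 < u t x) by (apply u_pos; split; lra).
    unfold G, Q. R_ops.
    rewrite (Rpower_minus_2 (u t x) p Hu).
    assert (H := young_drift_bound (Rpower (u t x) (p - 2)) (u t x) (ux t x)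
      (Derive_n f 2 (u t x)) (v t x) M eta
      (Rlt_le _ _ (Rpower_gt_0 _ _)) (v_bound t x ltac:(split; lra)) Heta).
    lra.
Qed.

Lemma RInt_dissipation_ge p t : 0 < t < T ->
  eta * RInt (fun x => Rpower (u t x) (p - 2) * ux t x ^ 2) 0 L <=
  RInt (fun x => (eta + 2 * u t x * Derive_n f 2 (u t x))
                 * Rpower (u t x) (p - 2) * (Derive (u t) x) ^ 2) 0 L.
Proof.
  intro Ht.
  rewrite <- (RInt_scal (V := R_CompleteNormedModule)) by solve_ex_RInt_slice.
  apply RInt_le; [lra | | |].
  - apply (ex_RInt_scal (V := R_CompleteNormedModule)). solve_ex_RInt_slice.
  - apply (ex_RInt_ext (fun x => (eta + 2 * u t x * Derive_n f 2 (u t x))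
                                 * Rpower (u t x) (p - 2) * ux t x ^ 2)); [|solve_ex_RInt_slice].
    rewrite Rmin_left, Rmax_right by lra. intros x Hx. rewrite Derive_u_slice by lra. reflexivity.
  - intros x Hx. rewrite Derive_u_slice by lra. R_ops.
    assert (Hu : 0 < u t x) by (apply u_pos; split; lra).
    assert (Hw := Rpower_gt_0 (u t x) (p - 2)). assert (Hf2 := f2_nonneg _ Hu).
    assert (0 <= u t x * Derive_n f 2 (u t x) * (Rpower (u t x) (p - 2) * ux t x ^ 2))
      by (apply Rmult_le_pos; [apply Rmult_le_pos | apply Rmult_le_pos; [| apply pow2_ge_0]]; lra).
    lra.
Qed.

Lemma Lp_interpolation p t d : 0 < t < T -> 0 < d ->
  Lp_mass L u p t <=
  d * (p ^ 2 / 4 * RInt (fun x => Rpower (u t x) (p - 2) * ux t x ^ 2) 0 L)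
  + (/ L + L / (4 * d)) * Lp_mass L u (p / 2) t ^ 2.
Proof.
  intros Ht Hd. assert (Ht0 : 0 <= t < T) by lra.
  set (W y := Rpower (u t (clamp L y)) (p / 2)).
  set (W' y := p / 2 * Rpower (u t (clamp L y)) (p / 2 - 1) * ux t (clamp L y)).
  assert (H := RInt_sqr_interpolation W W' 0 L HL).
  rewrite Rminus_0_r in H.
  replace (RInt (fun x => W x ^ 2) 0 L) with (Lp_mass L u p t) in H.
  replace (RInt W 0 L) with (Lp_mass L u (p / 2) t) in H.
  replace (RInt (fun x => W' x ^ 2) 0 L)
    with (p ^ 2 / 4 * RInt (fun x => Rpower (u t x) (p - 2) * ux t x ^ 2) 0 L) in H.
  apply H; [intro; unfold W; solve_slice_continuity | intro; unfold W'; solve_slice_continuity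
           | | exact Hd |].
  - intros x Hx. apply (is_derive_ext_loc (fun y => Rpower (u t y) (p / 2))).
    + apply (filter_imp (fun y => 0 < y < L)); [|apply locally_open_interval, Hx].
      intros y Hy. unfold W. rewrite clamp_id by lra. reflexivity.
    + unfold W'. rewrite clamp_id by lra. apply is_derive_Rpower_slice; assumption.
  - intros x _. apply Rlt_le, Rpower_gt_0.
  - rewrite <- (RInt_scal (V := R_CompleteNormedModule)) by solve_ex_RInt_slice.
    apply RInt_ext. rewrite Rmin_left, Rmax_right by lra. intros x Hx.
    unfold W'. rewrite clamp_id by lra.
    replace (p - 2) with (2 * (p / 2 - 1)) by field. rewrite <- Rpower_sqr. R_ops. field.
  - unfold Lp_mass. apply RInt_ext. rewrite Rmin_left, Rmax_right by lra. intros x Hx.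
    unfold W. rewrite clamp_id by lra. reflexivity.
  - unfold Lp_mass. apply RInt_ext. rewrite Rmin_left, Rmax_right by lra. intros x Hx.
    unfold W. rewrite clamp_id, Rpower_sqr by lra. f_equal. field.
Qed.

Lemma Lp_mass_dissipation p t : 2 < Rabs p -> 0 < t < T ->
  Derive (fun s => Lp_mass L u p s) t + Lp_mass L u p t <=
  absorption_constant (M ^ 2 / 2 / eta) L eta * p ^ 4 * Lp_mass L u (p / 2) t ^ 2.
Proof.
  intros Hp Ht.
  assert (HP : 0 < p * (p - 1)) by (revert Hp; unfold Rabs; destruct Rcase_abs; intro; nra).
  assert (Hk : 0 <= M ^ 2 / 2 / eta)
    by (apply Rdiv_le_0_compat; [apply Rdiv_le_0_compat; [apply pow2_ge_0 | lra] | exact Heta]).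
  apply absorb_dissipation with (D := RInt (fun x => Rpower (u t x) (p - 2) * ux t x ^ 2) 0 L);
    [exact Heta | exact HL | exact Hk | exact Hp | | |
     intros d Hd; apply Lp_interpolation; assumption].
  - apply RInt_ge_0; [lra | solve_ex_RInt_slice |].
    intros x _. apply Rmult_le_pos; [apply Rlt_le, Rpower_gt_0 | apply pow2_ge_0].
  - assert (Henergy := Lp_energy_inequality p t ltac:(intro; nra) ltac:(intro; nra) Ht).
    assert (Hdiss := RInt_dissipation_ge p t Ht).
    apply (Rmult_le_reg_l (/ (p * (p - 1)))); [apply Rinv_0_lt_compat, HP|].
    rewrite <- Rmult_assoc, Rinv_l, Rmult_1_l by lra. lra.
Qed.

End NoFluxSolution.

Theorem propositionA2 :
  forall (L eta M : R), 0 < L -> 0 < eta -> 0 < M ->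
  let K1 := M ^ 2 / 2 in
  exists K2 K3 K4 K5 : R, 0 < K2 /\ 0 < K3 /\ 0 < K4 /\ 0 < K5 /\
  forall (T beta : R) (f : R -> R) (v u : R -> R -> R),
    0 < T -> 0 < beta <= 1 ->
    C4beta_loc f beta ->
    (forall x, 0 < x -> 0 <= Derive_n f 2 x) ->
    C1_field L T v ->
    (forall t x, dom L T t x -> Rabs (v t x) <= M) ->
    classical_solution L T eta f v u ->
    0 < K1 /\
    (forall p t, p <> 0 -> p <> 1 -> 0 < t < T ->
       / (p * (p - 1)) * Derive (fun s => Lp_mass L u p s) t
       + / 2 * RInt (fun x => (eta + 2 * u t x * Derive_n f 2 (u t x))
                              * Rpower (u t x) (p - 2)
                              * (Derive (u t) x) ^ 2) 0 L
       <= K1 / eta * Lp_mass L u p t) /\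
    (forall p t, Rabs p > K5 -> 0 < t < T ->
       Derive (fun s => Lp_mass L u p s) t + K2 * Lp_mass L u p t
       <= K3 * Rpower (Rabs p) K4 * (Lp_mass L u (p / 2) t) ^ 2).
Proof.
  intros L eta M HL Heta HM K1.
  assert (HK1 : 0 < K1) by (unfold K1; nra).
  exists 1, (absorption_constant (K1 / eta) L eta), 4, 2.
  split; [lra|]. split; [|split; [lra | split; [lra|]]].
  { apply absorption_constant_pos; [apply Rlt_le, Rdiv_lt_0_compat | |]; assumption. }
  intros T beta f v u _ _ [Hf _] Hf2 [_ [vx [_ [Hvx [Hv _]]]]] Hvb
    [[ut [ux [uxx [Hut [Hux [Hu_cont [Hut_cont [Hux_cont _]]]]]]]] [Hpos [Heq Hbc]]].
  assert (Hf3 : forall k, (k < 3)%nat -> forall z, 0 < z -> ex_derive (Derive_n f k) z)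
    by (intros k Hk; apply Hf; lia).
  split; [exact HK1|]. split.
  - intros p t Hp0 Hp1 Ht.
    eapply Lp_energy_inequality; eassumption.
  - intros p t Hp Ht.
    rewrite Rmult_1_l, Rpower_Rabs_4 by (intro; subst; rewrite Rabs_R0 in Hp; lra).
    eapply Lp_mass_dissipation; eassumption.
Qed.
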